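(* Let $E$ be a Banach lattice with an order continuous norm, let $\mathfrak{B}$ be a Boolean subalgebra of $\mathfrak{B}(E)$, let $T\colon E\to E$ be a $\mathfrak{B}$-Volterra operator and let $\xi^1,\xi^2,\xi^3$ be forward filtrations in $\mathfrak{B}$. If $S_1\in\mathcal{L}_T(\xi^1,\xi^2)$ and $S_2\in\mathcal{L}_T(\xi^2,\xi^3)$ then $S_2S_1\in\mathcal{L}_T(\xi^1,\xi^3)$. For every $S\in\mathcal{L}_T(\xi^1,\xi^2)$ there is a norm continuous operator $\hat{L}(S)\in\mathcal{L}_T(L(\xi^1),L(\xi^2))$ such that $\hat{L}(S)\circ\mathbf{s}=\mathbf{s}\circ S$.
   Context: $\mathfrak{B}(E)$ is the Boolean algebra of all order projections on $E$ ($\pi\le\rho$ iff $\pi\rho=\pi$, zero $\mathbf 0$, unit $\mathbf 1=I_E$). A positive operator $T$ is $\mathfrak{B}$-Volterra if for all $\pi\in\mathfrak{B}$, $x,y\in E$, $\pi x=\pi y$ implies $\pi Tx=\pi Ty$. A forward filtration in $\mathfrak{B}$ is a map $\xi\colon\{0,1,\dots,\infty\}\to\mathfrak{B}$ with $\xi_n\le\xi_{n+1}$, $\xi_0=\mathbf 0$, $\xi_\infty=\mathbf 1$; $L(\xi)_0=\xi_0$, $L(\xi)_n=\xi_{n+1}$ ($n\ge1$). $\mathcal{M}_b(\xi)$: sequences $(x_n)_{n\ge1}$ in $E$ with $\xi_nx_m=x_n$ for $m\ge n\ge1$ and $\sup_n\|x_n\|<\infty$; $\mathcal{M}_r(\xi)=\{x^1-x^2:x^i\in\mathcal{M}_b(\xi)^+\}$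 with regular norm $\|x\|_r=\inf\{\sup_n\|y_n\|:y\in\mathcal{M}_b(\xi)^+,\pm x\le y\}$. $\hat{T}_\xi((x_n))=(\xi_nTx_n)$; $\mathbf{s}((x_n)_{n\ge1})=(x_{n+1})_{n\ge1}$ maps $\mathcal{M}_r(\xi)$ to $\mathcal{M}_r(L(\xi))$. $\mathcal{L}_T(\eta^1,\eta^2)$ is the set of norm continuous operators $S\colon\mathcal{M}_r(\eta^1)\to\mathcal{M}_r(\eta^2)$ with $S\circ\hat{T}_{\eta^1}=\hat{T}_{\eta^2}\circ S$. *)

From HB Require Import structures.
From mathcomp Require Import all_boot all_order all_algebra.
From mathcomp Require Import all_classical all_reals all_analysis.
Set Implicit Arguments. Unset Strict Implicit. Unset Printing Implicit Defensive.
Import Order.TTheory GRing.Theory Num.Theory.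
Import numFieldNormedType.Exports.
Local Open Scope classical_set_scope.
Local Open Scope ring_scope.

Section BanachLattice.
Variables (R : realType) (E : completeNormedModType R) (le : E -> E -> Prop).

Definition is_sup2 (x y z : E) : Prop :=
  le x z /\ le y z /\ forall w, le x w -> le y w -> le z w.

Record banach_lattice : Prop := {
  bl_refl : forall x, le x x;
  bl_antisym : forall x y, le x y -> le y x -> x = y;
  bl_trans : forall x y z, le x y -> le y z -> le x z;
  bl_add : forall x y z, le x y -> le (x + z) (y + z);
  bl_scale : forall (a : R) x y, 0 <= a -> le x y -> le (a *: x) (a *: y);
  bl_sup : forall x y, exists z, is_sup2 x y z;
  bl_norm : forall x y ax ay, is_sup2 x (- x) ax -> is_sup2 y (- y) ay ->
              le ax ay -> `|x| <= `|y|
}.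

(* order continuous norm: every net decreasing to 0 converges to 0 in norm
   (nets written as downward directed sets indexed by themselves) *)
Definition order_continuous_norm : Prop :=
  forall D : set E, D !=set0 ->
    (forall a b, D a -> D b -> exists2 c, D c & le c a /\ le c b) ->
    (forall d, D d -> le 0 d) ->
    (forall w, (forall d, D d -> le w d) -> le w 0) ->
    forall eps : R, 0 < eps -> exists2 d0, D d0 &
      forall d, D d -> le d d0 -> `|d| < eps.

Definition linear_op (P : E -> E) : Prop :=
  forall (a : R) x y, P (a *: x + y) = a *: P x + P y.

Definition order_projection (P : E -> E) : Prop :=
  linear_op P /\ (forall x, P (P x) = P x) /\
  (forall x, le 0 x -> le 0 (P x) /\ le (P x) x).

Definition proj_le (P Q : E -> E) : Prop := forall x, P (Q x) = P x.

Definition boolean_subalgebra (B : set (E -> E)) : Prop :=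
  (forall P, B P -> order_projection P) /\
  B (fun _ => 0) /\ B id /\
  (forall P Q, B P -> B Q -> B (P \o Q)) /\
  (forall P Q, B P -> B Q -> B (fun x => P x + Q x - P (Q x))) /\
  (forall P, B P -> B (fun x => x - P x)).

Definition positive_op (T : E -> E) : Prop :=
  linear_op T /\ forall x, le 0 x -> le 0 (T x).

Definition volterra (B : set (E -> E)) (T : E -> E) : Prop :=
  positive_op T /\
  forall P x y, B P -> P x = P y -> P (T x) = P (T y).

(* forward filtration: xi n for finite n; xi_oo = 1 is implicit *)
Definition forward_filtration (B : set (E -> E)) (xi : nat -> E -> E) : Prop :=
  (forall n, B (xi n)) /\ B id /\ xi 0%N = (fun _ => 0) /\
  (forall n, proj_le (xi n) (xi n.+1)).

Definition Lfilt (xi : nat -> E -> E) : nat -> E -> E :=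
  fun n => if n is 0%N then xi 0%N else xi n.+1.

(* A sequence (x_n)_{n>=1} is encoded as x : nat -> E with x k = x_{k+1}. *)
Definition Mb (xi : nat -> E -> E) (x : nat -> E) : Prop :=
  (forall n m, (n <= m)%N -> xi n.+1 (x m) = x n) /\
  exists M : R, forall n, `|x n| <= M.

Definition Mb_pos (xi : nat -> E -> E) (x : nat -> E) : Prop :=
  Mb xi x /\ forall n, le 0 (x n).

Definition Mr (xi : nat -> E -> E) (x : nat -> E) : Prop :=
  exists y1 y2, Mb_pos xi y1 /\ Mb_pos xi y2 /\ x = (fun n => y1 n - y2 n).

Definition rnorm (xi : nat -> E -> E) (x : nat -> E) : R :=
  inf [set r : R | exists y, Mb_pos xi y /\
        (forall n, le (x n) (y n) /\ le (- x n) (y n)) /\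
        r = sup [set `|y n| | n in [set: nat]]].

Definition That (T : E -> E) (xi : nat -> E -> E) (x : nat -> E) : nat -> E :=
  fun n => xi n.+1 (T (x n)).

Definition sshift (x : nat -> E) : nat -> E := fun n => x n.+1.

Definition LT (T : E -> E) (eta1 eta2 : nat -> E -> E)
    (S : (nat -> E) -> (nat -> E)) : Prop :=
  (forall x, Mr eta1 x -> Mr eta2 (S x)) /\
  (forall (a : R) x y, Mr eta1 x -> Mr eta1 y ->
     S (fun n => a *: x n + y n) = (fun n => a *: S x n + S y n)) /\
  (forall x, Mr eta1 x -> forall eps : R, 0 < eps -> exists2 delta : R, 0 < delta &
     forall z, Mr eta1 z -> rnorm eta1 (fun n => z n - x n) < delta ->
       rnorm eta2 (fun n => S z n - S x n) < eps) /\
  (forall x, Mr eta1 x -> S (That T eta1 x) = That T eta2 (S x)).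

End BanachLattice.

From HB Require Import structures.
From mathcomp Require Import all_boot all_order all_algebra.
From mathcomp Require Import all_classical all_reals all_analysis.
From mathcomp Require Import lra.
Set Implicit Arguments. Unset Strict Implicit. Unset Printing Implicit Defensive.
Import Order.TTheory GRing.Theory Num.Theory.
Import numFieldNormedType.Exports.
Local Open Scope classical_set_scope.
Local Open Scope ring_scope.

(* Composition in L_T is bookkeeping: membership in M_r, linearity,
   continuity and the intertwining with T-hat are each stable under
   composition. For the second claim let u prepend xi_1 y_1 to a sequence
   (y_n), a left inverse of s on M_r(xi). Both u and s preserve positivity and
   the martingale condition and do not increase the sup of the norms of a
   dominating sequence (for u since |xi_1 v| <= |v| when v >= 0), so they are
   regular-norm contractions; both also intertwine T-hat. Hence
   u in L_T(L(xi1), xi1) and s in L_T(xi2, L(xi2)), and L(S) := s S u lies in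
   L_T(L(xi1), L(xi2)) by the first claim. *)

Section LT_composition.
Variables (R : realType) (E : completeNormedModType R) (le : E -> E -> Prop).

Lemma LT_comp T xi1 xi2 xi3 S1 S2 :
  LT le T xi1 xi2 S1 -> LT le T xi2 xi3 S2 -> LT le T xi1 xi3 (S2 \o S1).
Proof.
move=> [M1 [lin1 [cont1 com1]]] [M2 [lin2 [cont2 com2]]].
split; [|split; [|split]].
- by move=> x /M1 /M2.
- by move=> a x y hx hy /=; rewrite lin1 // lin2 //; apply: M1.
- move=> x hx eps eps_gt0.
  have [d2 d2_gt0 H2] := cont2 _ (M1 _ hx) eps eps_gt0.
  have [d1 d1_gt0 H1] := cont1 _ hx d2 d2_gt0.
  by exists d1 => // z hz hzx; apply: H2; [apply: M1 | apply: H1].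
- by move=> x hx /=; rewrite com1 // com2 //; apply: M1.
Qed.

End LT_composition.

Section BanachLatticeFacts.
Variables (R : realType) (E : completeNormedModType R) (le : E -> E -> Prop).
Hypothesis hE : banach_lattice le.

Lemma bl_subr_ge0 a b : le a b <-> le 0 (b - a).
Proof.
split=> h.
- by have := bl_add hE (- a) h; rewrite subrr.
- by have := bl_add hE a h; rewrite add0r subrK.
Qed.

Lemma bl_oppr_le0 a : le 0 a -> le (- a) 0.
Proof. by move=> h; have := bl_add hE (- a) h; rewrite add0r subrr. Qed.

Lemma bl_oppr_le a : le 0 a -> le (- a) a.
Proof. by move=> h; apply: (bl_trans hE (bl_oppr_le0 h)). Qed.

Lemma bl_addr_ge0 a b : le 0 a -> le 0 b -> le 0 (a + b).
Proof.
move=> ha hb; apply: (bl_trans hE hb).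
by have := bl_add hE b ha; rewrite add0r.
Qed.

Lemma linear_op0 (P : E -> E) : linear_op P -> P 0 = 0.
Proof.
move=> hP; have := hP 1 0 0; rewrite !scale1r addr0 => h.
by apply: (addrI (P 0)); rewrite -h addr0.
Qed.

Lemma linear_opD (P : E -> E) x y : linear_op P -> P (x + y) = P x + P y.
Proof. by move=> hP; have := hP 1 x y; rewrite !scale1r. Qed.

Lemma linear_opB (P : E -> E) x y : linear_op P -> P (x - y) = P x - P y.
Proof. by move=> hP; rewrite addrC -scaleN1r hP scaleN1r addrC. Qed.

Lemma linear_opN (P : E -> E) x : linear_op P -> P (- x) = - P x.
Proof. by move=> hP; rewrite -sub0r linear_opB // linear_op0 // sub0r. Qed.

Lemma positive_op_le (P : E -> E) a b : positive_op le P -> le a b -> le (P a) (P b).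
Proof.
by move=> [hP hpos] /bl_subr_ge0 h; apply/bl_subr_ge0; rewrite -linear_opB //; apply: hpos.
Qed.

Lemma order_projection_positive (P : E -> E) :
  order_projection le P -> positive_op le P.
Proof. by move=> [hP [_ hpos]]; split=> // x /hpos []. Qed.

Lemma order_projection_norm (P : E -> E) v :
  order_projection le P -> le 0 v -> `|P v| <= `|v|.
Proof.
move=> [_ [_ hpos]] hv; have [Pv_ge0 Pv_le] := hpos v hv.
have [aPv haPv] := bl_sup hE (P v) (- P v).
have [av hav] := bl_sup hE v (- v).
apply: (bl_norm hE haPv hav); case: hav => av_ge _.
case: haPv => _ [_ aPv_min]; apply: aPv_min; first exact: (bl_trans hE Pv_le av_ge).
exact: (bl_trans hE (bl_oppr_le0 Pv_ge0) (bl_trans hE hv av_ge)).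
Qed.

End BanachLatticeFacts.

Section RegularNorm.
Variables (R : realType) (E : completeNormedModType R) (le : E -> E -> Prop).
Hypothesis hE : banach_lattice le.

Definition dominates (x y : nat -> E) : Prop :=
  forall n, le (x n) (y n) /\ le (- x n) (y n).

Definition supnorm (y : nat -> E) : R := sup [set `|y n| | n in [set: nat]].

Lemma supnorm_ub (y : nat -> E) M n : (forall k, `|y k| <= M) -> `|y n| <= supnorm y.
Proof.
move=> hM; apply: sup_upper_bound; last by exists n.
by split; [exists `|y 0%N|, 0%N | exists M => _ [k _ <-]].
Qed.

Lemma le_supnorm (y y' : nat -> E) M : (forall k, `|y k| <= M) ->
  (forall n, exists m, `|y' n| <= `|y m|) -> supnorm y' <= supnorm y.
Proof.
move=> hM hy'; apply: ge_sup; first by exists `|y' 0%N|, 0%N.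
by move=> _ [n _ <-]; have [m /le_trans] := hy' n; apply; apply: supnorm_ub hM.
Qed.

Lemma rnorm_le_supnorm xi x y :
  Mb_pos le xi y -> dominates x y -> rnorm le xi x <= supnorm y.
Proof.
move=> hy hxy; apply: ge_inf; last by exists y.
exists 0 => _ [z [[[_ [M hM]] _] [_ ->]]].
exact: le_trans (normr_ge0 _) (supnorm_ub 0%N hM).
Qed.

Lemma rnorm_le_map xi xi' x x' (G : (nat -> E) -> nat -> E) :
  (exists y, Mb_pos le xi y /\ dominates x y) ->
  (forall y, Mb_pos le xi y -> dominates x y ->
     [/\ Mb_pos le xi' (G y), dominates x' (G y) & supnorm (G y) <= supnorm y]) ->
  rnorm le xi' x' <= rnorm le xi x.
Proof.
move=> [y0 [hy0 hxy0]] hG; apply: lb_le_inf; first by exists (supnorm y0), y0.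
move=> _ [y [hy [hxy ->]]]; have [hGy hxGy hGsup] := hG y hy hxy.
exact: le_trans (rnorm_le_supnorm hGy hxGy) hGsup.
Qed.

Section Filtration.
Variable xi : nat -> E -> E.
Hypothesis xi_lin : forall n, linear_op (xi n).

Lemma Mb_posD y1 y2 : Mb_pos le xi y1 -> Mb_pos le xi y2 ->
  Mb_pos le xi (fun n => y1 n + y2 n).
Proof.
move=> [[h1 [M1 hM1]] p1] [[h2 [M2 hM2]] p2]; split; [split|].
- by move=> n m hnm; rewrite linear_opD // h1 // h2.
- by exists (M1 + M2) => n; apply: le_trans (ler_normD _ _) _; apply: lerD.
- by move=> n; apply: (bl_addr_ge0 hE).
Qed.

Lemma MrB z x : Mr le xi z -> Mr le xi x -> Mr le xi (fun n => z n - x n).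
Proof.
move=> [a1 [a2 [ha1 [ha2 ->]]]] [b1 [b2 [hb1 [hb2 ->]]]].
exists (fun n => a1 n + b2 n), (fun n => a2 n + b1 n).
split; [exact: Mb_posD | split; first exact: Mb_posD].
by apply: funext => n; rewrite opprB opprD addrACA.
Qed.

Lemma Mr_dominated x : Mr le xi x -> exists y, Mb_pos le xi y /\ dominates x y.
Proof.
move=> [y1 [y2 [h1 [h2 ->]]]]; exists (fun n => y1 n + y2 n).
split=> [|n]; first exact: Mb_posD.
split.
  rewrite [y1 n - _]addrC [y1 n + _]addrC; apply: (bl_add hE).
  exact: (bl_oppr_le hE (h2.2 n)).
rewrite opprB [y2 n - _]addrC; apply: (bl_add hE).
exact: (bl_oppr_le hE (h1.2 n)).
Qed.

Lemma Mr_compat x n m : Mr le xi x -> (n <= m)%N -> xi n.+1 (x m) = x n.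
Proof.
by move=> [y1 [y2 [[[h1 _] _] [[[h2 _] _] ->]]]] hnm; rewrite linear_opB // h1 // h2.
Qed.

Lemma LT_contraction T xi' F :
  (forall x, Mr le xi x -> Mr le xi' (F x)) ->
  (forall (a : R) x y, Mr le xi x -> Mr le xi y ->
     F (fun n => a *: x n + y n) = (fun n => a *: F x n + F y n)) ->
  (forall x, Mr le xi x -> rnorm le xi' (F x) <= rnorm le xi x) ->
  (forall x, Mr le xi x -> F (That T xi x) = That T xi' (F x)) ->
  LT le T xi xi' F.
Proof.
move=> hM hlin hnorm hcom; split=> //; split=> //; split=> // x hx eps eps_gt0.
exists eps => // z hz hzx.
have -> : (fun n => F z n - F x n) = F (fun n => -1 *: x n + z n).
  by rewrite hlin //; apply: funext => n; rewrite scaleN1r addrC.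
have -> : (fun n => -1 *: x n + z n) = (fun n => z n - x n).
  by apply: funext => n; rewrite scaleN1r addrC.
by apply: le_lt_trans hzx; apply: hnorm; apply: MrB.
Qed.

End Filtration.
End RegularNorm.

Section Shift.
Variables (R : realType) (E : completeNormedModType R) (le : E -> E -> Prop).
Hypothesis hE : banach_lattice le.
Variable xi : nat -> E -> E.
Hypothesis xi_proj : forall n, order_projection le (xi n).
Hypothesis xi_incr : forall n, proj_le (xi n) (xi n.+1).

Let xi_lin n : linear_op (xi n). Proof. by case: (xi_proj n). Qed.

Let Lxi_lin n : linear_op (Lfilt xi n). Proof. by case: n => *; apply: xi_lin. Qed.

Lemma sshift_Mb_pos y : Mb_pos le xi y -> Mb_pos le (Lfilt xi) (sshift y).
Proof.
move=> [[hy [M hM]] hpos]; split=> [|n]; last exact: hpos.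
by split=> [n m hnm|]; [apply: hy | exists M => n; apply: hM].
Qed.

Lemma sshift_Mr x : Mr le xi x -> Mr le (Lfilt xi) (sshift x).
Proof.
move=> [y1 [y2 [h1 [h2 ->]]]].
exists (sshift y1), (sshift y2).
by split; [|split]; [exact: sshift_Mb_pos h1 | exact: sshift_Mb_pos h2 |].
Qed.

Lemma rnorm_sshift x : Mr le xi x -> rnorm le (Lfilt xi) (sshift x) <= rnorm le xi x.
Proof.
move=> hx; apply: (rnorm_le_map (G := @sshift R E)); first exact: Mr_dominated.
move=> y hy hxy; split=> [|n|]; [exact: sshift_Mb_pos | exact: hxy|].
by case: hy => [[_ [M hM]] _]; apply: (le_supnorm hM) => n; exists n.+1.
Qed.

Lemma LT_sshift T : LT le T xi (Lfilt xi) (@sshift R E).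
Proof.
apply: LT_contraction => //; [exact: sshift_Mr | exact: rnorm_sshift].
Qed.

Definition unshift (y : nat -> E) : nat -> E :=
  fun n => if n is k.+1 then y k else xi 1%N (y 0%N).

Lemma unshift_Mb_pos y : Mb_pos le (Lfilt xi) y -> Mb_pos le xi (unshift y).
Proof.
move=> [[hy [M hM]] hpos]; have [_ [xi1_idem xi1_pos]] := xi_proj 1%N.
split; [split|].
- case=> [|n] [|m] hnm /=; [exact: xi1_idem | | by [] | exact: hy].
  by rewrite -(hy 0%N m) //= xi_incr.
- exists (M + `|xi 1%N (y 0%N)|) => -[|n] /=.
    by have := le_trans (normr_ge0 _) (hM 0%N); lra.
  by have := hM n; have := normr_ge0 (xi 1%N (y 0%N)); lra.
- by case=> [|n] //=; apply: (xi1_pos _ (hpos 0%N)).1.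
Qed.

Lemma unshift_lin (a : R) z x :
  unshift (fun n => a *: z n + x n) = (fun n => a *: unshift z n + unshift x n).
Proof. by apply: funext; case=> [|n] //=; rewrite /unshift xi_lin. Qed.

Lemma unshiftB z x :
  unshift (fun n => z n - x n) = (fun n => unshift z n - unshift x n).
Proof. by apply: funext; case=> [|n] //=; rewrite /unshift linear_opB. Qed.

Lemma unshift_Mr y : Mr le (Lfilt xi) y -> Mr le xi (unshift y).
Proof.
move=> [y1 [y2 [h1 [h2 ->]]]]; exists (unshift y1), (unshift y2).
by split; [|split]; [exact: unshift_Mb_pos | exact: unshift_Mb_pos | exact: unshiftB].
Qed.

Lemma unshift_sshift x : Mr le xi x -> unshift (sshift x) = x.
Proof.
by move=> hx; apply: funext; case=> [|n] //=; apply: (Mr_compat xi_lin hx (leqnSn 0)).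
Qed.

Lemma rnorm_unshift y :
  Mr le (Lfilt xi) y -> rnorm le xi (unshift y) <= rnorm le (Lfilt xi) y.
Proof.
move=> hy; apply: (rnorm_le_map (G := unshift)); first exact: Mr_dominated.
move=> w hw hyw; have xi1_pos := order_projection_positive (xi_proj 1%N).
split=> [|[|n]|]; [exact: unshift_Mb_pos | | exact: hyw |].
- have [hyw_le hyw_leN] := hyw 0%N.
  split; first exact: (positive_op_le hE xi1_pos hyw_le).
  by rewrite -linear_opN //; apply: (positive_op_le hE xi1_pos hyw_leN).
- case: hw => [[_ [M hM]] w_ge0]; apply: (le_supnorm hM) => -[|n] /=; last by exists n.
  by exists 0%N; apply: (order_projection_norm hE (xi_proj 1%N) (w_ge0 0%N)).
Qed.

(* T-hat commutes with unshift at the first coordinate because xi_1 T only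
   depends on xi_1 x, and xi_1 xi_1 y = xi_1 y. *)
Lemma LT_unshift T :
  (forall x y, xi 1%N x = xi 1%N y -> xi 1%N (T x) = xi 1%N (T y)) ->
  LT le T (Lfilt xi) xi unshift.
Proof.
move=> T_volterra; apply: LT_contraction => //.
- exact: unshift_Mr.
- by move=> a z x _ _; apply: unshift_lin.
- exact: rnorm_unshift.
move=> y _; apply: funext; case=> [|n] //=; rewrite /That /= xi_incr.
by apply: T_volterra; case: (xi_proj 1%N) => _ [-> _].
Qed.

End Shift.

Theorem proposition4p17 (R : realType) (E : completeNormedModType R)
  (le : E -> E -> Prop) (hE : banach_lattice le)
  (hoc : order_continuous_norm le)
  (B : set (E -> E)) (hB : boolean_subalgebra le B)
  (T : E -> E) (hT : volterra le B T)
  (xi1 xi2 xi3 : nat -> E -> E)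
  (h1 : forward_filtration B xi1) (h2 : forward_filtration B xi2)
  (h3 : forward_filtration B xi3) :
  (forall S1 S2, LT le T xi1 xi2 S1 -> LT le T xi2 xi3 S2 ->
     LT le T xi1 xi3 (S2 \o S1)) /\
  (forall S, LT le T xi1 xi2 S ->
     exists LS, LT le T (Lfilt xi1) (Lfilt xi2) LS /\
       forall x, Mr le xi1 x -> LS (sshift x) = sshift (S x)).
Proof.
split=> [S1 S2|S hS]; first exact: LT_comp.
have [[xi1_B [_ [_ xi1_incr]]] [xi2_B _]] := (h1, h2).
have xi1_proj n : order_projection le (xi1 n) := hB.1 _ (xi1_B n).
have xi2_proj n : order_projection le (xi2 n) := hB.1 _ (xi2_B n).
have T_volterra1 x y : xi1 1%N x = xi1 1%N y -> xi1 1%N (T x) = xi1 1%N (T y).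
  exact: hT.2.
exists (@sshift R E \o S \o unshift xi1); split.
  apply: LT_comp (LT_sshift hE xi2_proj T).
  exact: LT_comp (LT_unshift hE xi1_proj xi1_incr T_volterra1) hS.
by move=> x hx /=; rewrite (unshift_sshift xi1_proj hx).
Qed.
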